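(* Let $M$ be the allocation output by the online greedy algorithm for Model 2 and $N$ an optimal offline allocation, and fix a day $d_i$ with $|X_i|=|Y_i|+z$ for some $z>0$. Let $\rho$ be a path component of the symmetric difference $M_i\oplus N_i$ in $G_i$ that starts and ends with an edge of $N_i$, and let $c_k$ be a category that is an endpoint of $\rho$. Then the overall quota $q_k$ of $c_k$ is exhausted by the algorithm on or before day $d_i$, i.e. $M$ allocates exactly $q_k$ agents to category $c_k$ on days $d_1,\dots,d_i$.
   Context: Model 2: finite sets of agents $A$, categories $C$ and days $D=\{d_1,\dots,d_T\}$; each agent is eligible for a subset of categories; daily supply $s_i$ for day $d_i$; daily quota $q_{ik}$ for category $c_k$ on day $d_i$; overall quota $q_k$ for category $c_k$; each agent $a_j$ has a priority factor $\alpha_j>0$ and a set of available days; discount factor $\delta\in(0,1)$. An allocation maps each agent to a pair (eligible category, available day) or to $\emptyset$, with at most $q_{ik}$ agents getting $(c_k,d_i)$, at most $s_i$ agents getting day $d_i$, and at most $q_k$ agents getting category $c_k$ in total; agent $a_j$ allocated on day $d_i$ has utility $\alpha_j\delta^{i-1}$, and an optimal offline allocation maximizes total utility. The online greedy algorithm for Model 2: keep $r_k$, initially $q_k$; on each day $d_i$, let $A_i$ be the agents available on $d_i$ not yet allocated; form the bipartite graph $H_i$ between $A_i$ and $C$ with an edge $(a_j,c_k)$ when $a_j$ is eligible for $c_k$, of weight $\alpha_j\delta^{i-1}$, agents of capacity $1$ and $c_k$ of capacity $\min(q_{ik},r_k)$; compute a maximum-weight $b$-matching of size at most $s_i$, allocate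 accordingly on day $d_i$, and decrease $r_k$ by the number of agents allocated to $c_k$. An agent allocated by $N$ is of Type 1 if $M$ allocates it on a strictly earlier day than $N$; every other agent allocated by $N$ is of Type 2. $X_i$ is the set of Type 2 agents allocated by $N$ on day $d_i$ and $Y_i$ the set of agents allocated by $M$ on day $d_i$. $N_i$ is the set of edges $(a,c_k)$ with $a\in X_i$ and $N(a)=(c_k,d_i)$, $M_i$ the set of edges $(a,c_k)$ with $a\in Y_i$ and $M(a)=(c_k,d_i)$, and $G_i$ is the bipartite graph with parts $X_i\cup Y_i$ and $C$ and edge set $N_i\cup M_i$. *)

From HB Require Import structures.
From mathcomp Require Import all_boot all_order all_algebra.
Set Implicit Arguments. Unset Strict Implicit. Unset Printing Implicit Defensive.
Import Order.TTheory GRing.Theory Num.Theory.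
Local Open Scope ring_scope.

(* Days d_1,...,d_T are represented by 'I_T, day d_{i+1} being the ordinal i
   (so the utility factor delta^(i-1) of the paper becomes delta ^+ i).
   elig a c : agent a eligible for category c;  avail a d : a available on d;
   s d : daily supply;  qd d c : daily quota of c on d;  q c : overall quota.
   An allocation maps each agent to None (= emptyset) or Some (c, d). *)

Section Model2.
Variables (A C : finType) (T : nat).
Variables (elig : A -> C -> bool) (avail : A -> 'I_T -> bool).
Variables (s : 'I_T -> nat) (qd : 'I_T -> C -> nat) (q : C -> nat).

Definition allocation := A -> option (C * 'I_T).

Definition valid_alloc (x : allocation) : Prop :=
  [/\ (forall a c d, x a = Some (c, d) -> elig a c && avail a d),
      (forall d c, (#|[set a | x a == Some (c, d)]| <= qd d c)%N),
      (forall d, (#|[set a | [exists c, x a == Some (c, d)]]| <= s d)%N) &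
      (forall c, (#|[set a | [exists d, x a == Some (c, d)]]| <= q c)%N)].

Variables (R : realFieldType) (alpha : A -> R) (delta : R).

Definition utility (x : allocation) : R :=
  \sum_(a : A) match x a with Some (_, d) => alpha a * delta ^+ d | None => 0 end.

Definition optimal_alloc (x : allocation) : Prop :=
  valid_alloc x /\ forall y, valid_alloc y -> utility y <= utility x.

Definition used_before (M : allocation) (i : 'I_T) (c : C) : nat :=
  #|[set a | [exists d : 'I_T, (d < i)%N && (M a == Some (c, d))]]|.

Definition remaining (M : allocation) (i : 'I_T) (c : C) : nat :=
  (q c - used_before M i c)%N.

Definition avail_agents (M : allocation) (i : 'I_T) : {set A} :=
  [set a | avail a i &&
     ~~ [exists c, exists d : 'I_T, (d < i)%N && (M a == Some (c, d))]].

(* b-matchings of H_i of size at most s_i: each agent (capacity 1) is mapped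
   to at most one category; category c has capacity min(qd i c, r_c). *)
Definition feasible_bmatching (M : allocation) (i : 'I_T) (b : A -> option C)
  : Prop :=
  [/\ (forall a c, b a = Some c -> (a \in avail_agents M i) && elig a c),
      (forall c, (#|[set a | b a == Some c]| <= minn (qd i c) (remaining M i c))%N) &
      (#|[set a | b a != None]| <= s i)%N].

Definition bm_weight (i : 'I_T) (b : A -> option C) : R :=
  \sum_(a : A) if b a is Some _ then alpha a * delta ^+ i else 0.

Definition day_matching (M : allocation) (i : 'I_T) : A -> option C :=
  fun a => match M a with
           | Some (c, d) => if d == i then Some c else None
           | None => None end.

(* M is a possible output of the online greedy algorithm: on every day, the
   allocation of that day is a maximum-weight b-matching of H_i (any tie
   breaking allowed). *)
Definition greedy_output (M : allocation) : Prop :=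
  forall i : 'I_T,
    feasible_bmatching M i (day_matching M i) /\
    forall b, feasible_bmatching M i b ->
      bm_weight i b <= bm_weight i (day_matching M i).

Definition type1 (M N : allocation) (a : A) : bool :=
  [exists c, exists d : 'I_T, exists c', exists d' : 'I_T,
     [&& N a == Some (c, d), M a == Some (c', d') & (d' < d)%N]].

Definition Xset (M N : allocation) (i : 'I_T) : {set A} :=
  [set a | [exists c, N a == Some (c, i)] && ~~ type1 M N a].

Definition Yset (M : allocation) (i : 'I_T) : {set A} :=
  [set a | [exists c, M a == Some (c, i)]].

Definition Nedges (M N : allocation) (i : 'I_T) : {set A * C} :=
  [set e | (e.1 \in Xset M N i) && (N e.1 == Some (e.2, i))].

Definition Medges (M : allocation) (i : 'I_T) : {set A * C} :=
  [set e | (e.1 \in Yset M i) && (M e.1 == Some (e.2, i))].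

(* edge membership for vertices of the bipartite graph (agents inl, categories inr) *)
Definition edge_in (S : {set A * C}) (u v : A + C) : bool :=
  match u, v with
  | inl a, inr c => (a, c) \in S
  | inr c, inl a => (a, c) \in S
  | _, _ => false
  end.

Definition symdiff (E1 E2 : {set A * C}) : {set A * C} :=
  (E1 :\: E2) :|: (E2 :\: E1).

(* rho = v0 :: p is a path component of the graph with edge set E:
   a simple path with at least one edge, whose every edge is in E, and such
   that every E-edge incident to a vertex of rho is an edge of rho. *)
Definition path_component (E : {set A * C}) (v0 : A + C) (p : seq (A + C))
  : Prop :=
  [/\ p != [::], uniq (v0 :: p), path (edge_in E) v0 p &
      forall v w, v \in v0 :: p -> edge_in E v w ->
        ((v, w) \in zip (v0 :: p) p) || ((w, v) \in zip (v0 :: p) p)].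

Definition rho_edge (v0 : A + C) (p : seq (A + C)) (j : nat) : (A + C) * (A + C) :=
  (nth v0 (v0 :: p) j, nth v0 (v0 :: p) j.+1).

Definition alternating (S : {set A * C}) (v0 : A + C) (p : seq (A + C)) : Prop :=
  forall j, (j.+2 <= size p)%N ->
    edge_in S (rho_edge v0 p j).1 (rho_edge v0 p j).2 =
    ~~ edge_in S (rho_edge v0 p j.+1).1 (rho_edge v0 p j.+1).2.

End Model2.

(* Exchange argument.  Suppose that at the start of day d_i the remaining
   quota r_k of c_k exceeds the number of agents M gives to c_k on that day.
   Switch M's day-i matching along rho: the agents of rho take their N_i-edges,
   all other agents keep their M_i-edges.  An interior category of rho trades
   one M_i-agent for one N_i-agent; the endpoint c_k gains at most one agent,
   which stays within r_k and, since all of c_k's edges in M_i (+) N_i are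
   N_i-edges, within q_ik; the other endpoint of rho (odd length) is an agent
   unmatched by M, which becomes matched, and the supply s_i still suffices
   because |Y_i| < |X_i|.  The result is a b-matching of H_i of larger weight
   than M's, contradicting the greedy choice, so M uses all of r_k on d_i. *)

From HB Require Import structures.
From mathcomp Require Import all_boot all_order all_algebra.
Import Order.TTheory GRing.Theory Num.Theory.
Set Implicit Arguments. Unset Strict Implicit. Unset Printing Implicit Defensive.

Section EdgeIn.
Variables A C : finType.
Implicit Types (S : {set A * C}) (u w : A + C).

Lemma edge_inC S u w : edge_in S u w = edge_in S w u.
Proof. by case: u; case: w. Qed.

Lemma edge_in_is_inl S u w : edge_in S u w -> is_inl u != is_inl w.
Proof. by case: u; case: w. Qed.

Lemma edge_in_symdiff (E1 E2 : {set A * C}) u w :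
  edge_in (symdiff E1 E2) u w = edge_in E1 u w (+) edge_in E2 u w.
Proof.
by case: u => [a|c]; case: w => [a'|c'] //=; rewrite !inE;
  case: (_ \in E1); case: (_ \in E2).
Qed.

End EdgeIn.

Section AlternatingComponent.
Variables (A C : finType) (E S : {set A * C}) (v0 : A + C) (p : seq (A + C)).
Hypotheses (hrho : path_component E v0 p) (halt : alternating S v0 p)
  (hstart : edge_in S v0 (head v0 p))
  (hend : edge_in S (last v0 (belast v0 p)) (last v0 p)).

Local Notation n := (size p).
Local Notation x j := (nth v0 (v0 :: p) j).

Definition path_end (v : A + C) := (v == v0) || (v == last v0 p).

Lemma mem_path_end v : path_end v -> v \in v0 :: p.
Proof. by case/orP => /eqP ->; rewrite ?mem_head ?mem_last. Qed.

Lemma size_path_gt0 : 0 < n.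
Proof. by case: hrho; case: (p). Qed.

Lemma component_step j : j < n -> edge_in E (x j) (x j.+1).
Proof. by case: hrho => _ _ /(pathP v0) + _; apply. Qed.

Lemma alternating_step j : j < n -> edge_in S (x j) (x j.+1) = ~~ odd j.
Proof.
elim: j => [|j IH] lt_jn; first by move: hstart lt_jn; case: (p) => //= ? ? ->.
move: (halt lt_jn); rewrite /rho_edge /= IH ?(ltnW lt_jn) //=.
by case: (edge_in _ _ _); case: (odd j).
Qed.

Lemma odd_size_path : odd n.
Proof.
have n_gt0 := size_path_gt0.
have last_p : last v0 p = x n.-1.+1 by rewrite prednK // (last_nth v0).
have last_belast_p : last v0 (belast v0 p) = x n.-1.
  by rewrite lastI nth_rcons size_belast ltn_predL n_gt0 -(nth_last v0) size_belast.
move: hend; rewrite last_p last_belast_p alternating_step ?prednK //.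
by rewrite -{2}(prednK n_gt0) /=; case: odd.
Qed.

Lemma is_inl_nth j : j <= n -> is_inl (x j) = is_inl v0 (+) odd j.
Proof.
elim: j => [|j IH] lt_jn; first by rewrite addbF.
have := edge_in_is_inl (component_step lt_jn).
by rewrite IH ?(ltnW lt_jn) //=; case: is_inl; case: is_inl; case: odd.
Qed.

Lemma path_end_is_inl : is_inl v0 != is_inl (last v0 p).
Proof. by rewrite (last_nth v0) is_inl_nth // odd_size_path addbT; case: is_inl. Qed.

Lemma mem_pathP v : reflect (exists2 j, j <= n & v = x j) (v \in v0 :: p).
Proof. by apply: (iffP (nthP v0)) => -[j le_jn Ev]; exists j. Qed.

Lemma nth_path_inj j k : j <= n -> k <= n -> x j = x k -> j = k.
Proof.
by case: hrho => _ uniq_p _ _ le_jn le_kn /eqP; rewrite nth_uniq // => /eqP.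
Qed.

Lemma mem_zip_path u w : (u, w) \in zip (v0 :: p) p ->
  exists2 j, j < n & u = x j /\ w = x j.+1.
Proof.
have size_zip_p : size (zip (v0 :: p) p) = n.
  by rewrite size_zip /= (minn_idPr (leqnSn _)).
case/(nthP (v0, v0)) => j; rewrite size_zip_p => lt_jn.
by rewrite nth_zip_cond size_zip_p lt_jn => -[<- <-]; exists j.
Qed.

Lemma component_nbr j w : j <= n -> edge_in E (x j) w ->
  (j < n /\ w = x j.+1) \/ (exists2 k, j = k.+1 & w = x k).
Proof.
move=> le_jn e_jw; have x_j := mem_nth v0 (le_jn : j < size (v0 :: p)).
case: hrho => _ _ _ /(_ _ _ x_j e_jw).
case/orP => /mem_zip_path [k lt_kn []].
  by move=> /(nth_path_inj le_jn (ltnW lt_kn)) -> ->; left.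
by move=> -> /(nth_path_inj le_jn lt_kn) ->; right; exists k.
Qed.

Lemma component_closed u w : u \in v0 :: p -> edge_in E u w -> w \in v0 :: p.
Proof.
case/mem_pathP => j le_jn -> /(component_nbr le_jn) [[lt_jn ->]|[k Ej ->]].
  exact: mem_nth.
by apply: mem_nth; rewrite /= ltnS ltnW // -Ej.
Qed.

Lemma component_S_nbrE j w : j <= n ->
  edge_in E (x j) w -> edge_in S (x j) w -> w = if odd j then x j.-1 else x j.+1.
Proof.
move=> le_jn /(component_nbr le_jn) [[lt_jn ->]|[k Ej ->]].
  by rewrite alternating_step //; case: odd.
by move: le_jn; rewrite Ej => lt_kn; rewrite edge_inC alternating_step //=; case: odd.
Qed.

Lemma component_S_nbr v : v \in v0 :: p -> exists2 w, edge_in E v w & edge_in S v w.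
Proof.
case/mem_pathP => j le_jn ->; case odd_j: (odd j).
  case: j odd_j le_jn => // k odd_k lt_kn.
  by exists (x k); rewrite edge_inC ?component_step ?alternating_step.
have lt_jn : j < n.
  by rewrite ltn_neqAle le_jn andbT; apply: contraFneq odd_j => ->; exact: odd_size_path.
by exists (x j.+1); rewrite ?component_step ?alternating_step ?odd_j.
Qed.

Lemma component_S_nbr_uniq v w w' : v \in v0 :: p ->
  edge_in E v w -> edge_in S v w -> edge_in E v w' -> edge_in S v w' -> w = w'.
Proof.
case/mem_pathP => j le_jn -> Ew Sw Ew' Sw'.
by rewrite (component_S_nbrE le_jn Ew Sw) (component_S_nbrE le_jn Ew' Sw').
Qed.

Lemma component_end_nbr v w : path_end v -> edge_in E v w -> edge_in S v w.
Proof.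
case/orP => /eqP ->.
  by move=> /(component_nbr (leq0n n)) [[lt0n ->]|[]] //; exact: alternating_step lt0n.
rewrite (last_nth v0) => /(component_nbr (leqnn n)) [[]|[k Ek ->]]; rewrite ?ltnn //.
have lt_kn : k < n by rewrite Ek.
by rewrite Ek edge_inC alternating_step //; move: odd_size_path; rewrite Ek.
Qed.

Lemma component_inner_nbr v : v \in v0 :: p -> ~~ path_end v ->
  exists2 w, edge_in E v w & ~~ edge_in S v w.
Proof.
case/mem_pathP => j le_jn ->; rewrite /path_end (last_nth v0) negb_or.
case: j le_jn => [|k] lt_kn; first by rewrite eqxx.
case/andP=> _ ne_kn.
have lt_k1n : k.+1 < n.
  by rewrite ltn_neqAle lt_kn andbT; apply: contraNneq ne_kn => ->.
case odd_k: (odd k).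
  by exists (x k); rewrite edge_inC ?component_step ?alternating_step ?odd_k.
by exists (x k.+2); rewrite ?component_step ?alternating_step //= odd_k.
Qed.

End AlternatingComponent.

Section Allocations.
Variables (A C : finType) (T : nat).
Variables (elig : A -> C -> bool) (avail : A -> 'I_T -> bool).
Variables (s : 'I_T -> nat) (qd : 'I_T -> C -> nat) (q : C -> nat).
Implicit Types (M N : allocation A C T) (i : 'I_T) (a : A) (c : C).

Lemma day_matchingE M i a c :
  (day_matching M i a == Some c) = (M a == Some (c, i)).
Proof.
rewrite /day_matching; case: (M a) => [[c' d]|] //.
case: (d =P i) => [->|ne_di]; first by apply/eqP/eqP => -[->].
by apply/esym/eqP => -[_ Ed]; apply: ne_di.
Qed.

Lemma day_matching_support M i : [set a | day_matching M i a != None] = Yset M i.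
Proof.
apply/setP => a; rewrite !inE; apply/idP/existsP => [|[c]].
  by case Ea: (day_matching M i a) => [c|] // _; exists c; rewrite -day_matchingE Ea.
by rewrite -day_matchingE => /eqP ->.
Qed.

Lemma in_Medges M i a c : ((a, c) \in Medges M i) = (M a == Some (c, i)).
Proof. by rewrite !inE /=; apply: andb_idl => Ma; apply/existsP; exists c. Qed.

Lemma in_Nedges M N i a c :
  ((a, c) \in Nedges M N i) = (a \in Xset M N i) && (N a == Some (c, i)).
Proof. by rewrite inE. Qed.

Lemma Xset_avail_agents M N i a c : valid_alloc elig avail s qd q N ->
  a \in Xset M N i -> N a = Some (c, i) -> (a \in avail_agents avail M i) && elig a c.
Proof.
case=> N_elig _ _ _; rewrite inE => /andP [_ not_type1] Na.
have /andP [-> avail_a] := N_elig _ _ _ Na; rewrite inE avail_a andbT /=.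
apply: contra not_type1 => /existsP [c' /existsP [d /andP [lt_di Ma]]].
by apply/existsP; exists c; apply/existsP; exists i; apply/existsP; exists c';
  apply/existsP; exists d; rewrite Na eqxx Ma.
Qed.

Definition allocated_before M (k : nat) c : nat :=
  #|[set a | [exists d : 'I_T, (d < k) && (M a == Some (c, d))]]|.

Lemma allocated_before_succ M i c :
  allocated_before M i.+1 c = allocated_before M i c + #|[set a | M a == Some (c, i)]|.
Proof.
rewrite /allocated_before -cardsUI.
have -> : [set a | [exists d : 'I_T, (d < i) && (M a == Some (c, d))]]
    :&: [set a | M a == Some (c, i)] = set0.
  apply/setP => a; rewrite !inE; apply/andP => -[/existsP [d /andP [lt_di /eqP ->]]].
  by case/eqP => Ed; rewrite Ed ltnn in lt_di.
rewrite cards0 addn0; apply: eq_card => a; rewrite !inE.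
apply/existsP/orP => [[d /andP [le_di Ma]]|[/existsP [d /andP [lt_di Ma]]|Ma]].
- move: le_di; rewrite ltnS leq_eqVlt => /orP [/eqP/val_inj Ed|lt_di].
    by right; rewrite -Ed.
  by left; apply/existsP; exists d; rewrite lt_di.
- by exists d; rewrite Ma ltnW.
- by exists i; rewrite Ma ltnS leqnn.
Qed.

Lemma card_day_le_cap M i c :
  feasible_bmatching elig avail s qd q M i (day_matching M i) ->
  #|[set a | M a == Some (c, i)]| <= minn (qd i c) (remaining q M i c).
Proof.
case=> _ /(_ c) le_cap _; apply: leq_trans le_cap; apply: subset_leq_card.
by apply/subsetP => a; rewrite !inE day_matchingE.
Qed.

Lemma card_day_le_remaining M i c :
  feasible_bmatching elig avail s qd q M i (day_matching M i) ->
  #|[set a | M a == Some (c, i)]| <= remaining q M i c.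
Proof. by move/(card_day_le_cap c)/leq_trans; apply; exact: geq_minr. Qed.

Lemma allocated_before_le_quota M c k :
  (forall i, feasible_bmatching elig avail s qd q M i (day_matching M i)) ->
  k <= T -> allocated_before M k c <= q c.
Proof.
move=> M_feas; elim: k => [|k IH] lt_kT.
  suff -> : allocated_before M 0 c = 0 by [].
  by apply: eq_card0 => a; rewrite !inE; apply/existsP => -[].
have := allocated_before_succ M (Ordinal lt_kT) c; rewrite /= => ->.
have le_kq := IH (ltnW lt_kT).
have := card_day_le_remaining c (M_feas (Ordinal lt_kT)).
by rewrite /remaining /= -(leq_add2l (allocated_before M k c)) subnKC.
Qed.

End Allocations.

Local Open Scope ring_scope.

Lemma bm_weight_lt (A C : finType) (T : nat) (R : realFieldType)
    (alpha : A -> R) (delta : R) (i : 'I_T) (b b' : A -> option C) (a0 : A) :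
  (forall a, 0 < alpha a) -> 0 < delta ->
  (forall a, b a != None -> b' a != None) -> b a0 = None -> b' a0 != None ->
  bm_weight alpha delta i b < bm_weight alpha delta i b'.
Proof.
move=> alpha_gt0 delta_gt0 supp_b b_a0 b'_a0.
have delta_i_gt0 : 0 < delta ^+ i := exprn_gt0 _ delta_gt0.
rewrite /bm_weight (bigD1 a0) // [X in _ < X](bigD1 a0) //= b_a0 add0r.
case: (b' a0) b'_a0 => // _ _; rewrite -[X in X < _]add0r.
apply: ltr_leD; first by rewrite mulr_gt0.
apply: ler_sum => a _; move: (supp_b a).
case: (b a) => [?|]; case: (b' a) => [?|] //=; first by move/(_ isT).
by rewrite ltW // mulr_gt0.
Qed.

Section SwitchAlongComponent.
Variables (A C : finType) (T : nat)
  (elig : A -> C -> bool) (avail : A -> 'I_T -> bool)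
  (s : 'I_T -> nat) (qd : 'I_T -> C -> nat) (q : C -> nat)
  (R : realFieldType) (alpha : A -> R) (delta : R).
Hypotheses (alpha_gt0 : forall a, 0 < alpha a) (delta_gt0 : 0 < delta).
Variables (M N : allocation A C T).
Hypotheses (hM : greedy_output elig avail s qd q alpha delta M)
  (hN : valid_alloc elig avail s qd q N).
Variables (i : 'I_T) (z : nat).
Hypotheses (hz : (0 < z)%N) (hXY : #|Xset M N i| = (#|Yset M i| + z)%N).
Variables (v0 : A + C) (p : seq (A + C)).

Local Notation Mi := (Medges M i).
Local Notation Ni := (Nedges M N i).
Local Notation E := (symdiff Mi Ni).

Hypotheses (hrho : path_component E v0 p) (halt : alternating Ni v0 p)
  (hstart : edge_in Ni v0 (head v0 p))
  (hend : edge_in Ni (last v0 (belast v0 p)) (last v0 p)).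
Variable ck : C.
Hypothesis hck : (v0 == inr ck) || (last v0 p == inr ck).

Local Notation vs := (v0 :: p).
Local Notation day_set c := [set a | M a == Some (c, i)].

Definition switched (a : A) : option C :=
  if inl a \in vs then (if N a is Some (c, _) then Some c else None)
  else day_matching M i a.

Local Notation switched_set c := [set a | switched a == Some c].

Lemma Nedges_path_agent a : inl a \in vs -> exists c, (a, c) \in Ni.
Proof.
case/(component_S_nbr hrho halt hstart hend) => -[//|c] _ Sac; by exists c.
Qed.

Lemma switchedE a c :
  (switched a == Some c) = if inl a \in vs then (a, c) \in Ni else M a == Some (c, i).
Proof.
rewrite /switched; case: ifP => a_vs; last exact: day_matchingE.
have [c0] := Nedges_path_agent a_vs; rewrite !in_Nedges => /andP [-> /eqP ->] /=.
by apply/eqP/eqP => -[->].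
Qed.

Lemma switched_path_agent a : inl a \in vs -> switched a != None.
Proof.
move=> a_vs; have [c] := Nedges_path_agent a_vs.
by rewrite in_Nedges /switched a_vs => /andP [_ /eqP ->].
Qed.

Lemma switched_gain a c : switched a == Some c -> M a != Some (c, i) ->
  [/\ inl a \in vs, edge_in E (inr c) (inl a) & edge_in Ni (inr c) (inl a)].
Proof.
rewrite switchedE; case: ifP => [a_vs Nac Mac|_ /eqP ->]; last by rewrite eqxx.
by split; rewrite // edge_in_symdiff /= in_Medges (negbTE Mac) Nac.
Qed.

Lemma card_switched_gain c : (#|switched_set c :\: day_set c| <= 1)%N.
Proof.
apply/card_le1_eqP => a b; rewrite !inE => /andP [Mac Sac] /andP [Mbc Sbc].
have [a_vs Eac Nac] := switched_gain Sac Mac.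
have [b_vs Ebc Nbc] := switched_gain Sbc Mbc.
have c_vs : inr c \in vs := component_closed hrho a_vs (Eac : edge_in E (inl a) (inr c)).
by case: (component_S_nbr_uniq hrho halt hstart c_vs Eac Nac Ebc Nbc).
Qed.

Lemma path_end_category c : path_end v0 p (inr c) -> c = ck.
Proof.
have := path_end_is_inl hrho halt hstart hend; rewrite /path_end.
move: (last v0 p) hck => l /orP [] /eqP -> ends_inl /orP [] /eqP c_end.
all: by [move: ends_inl; rewrite -c_end | case: c_end].
Qed.

Lemma switched_loss c : c != ck -> switched_set c :\: day_set c != set0 ->
  day_set c :\: switched_set c != set0.
Proof.
move=> ne_cck /set0Pn [a]; rewrite !inE => /andP [Mac Sac].
have [a_vs Eac _] := switched_gain Sac Mac.
have c_vs : inr c \in vs := component_closed hrho a_vs (Eac : edge_in E (inl a) (inr c)).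
have c_inner : ~~ path_end v0 p (inr c).
  by apply: contra ne_cck => /path_end_category ->.
have [[b|//] Ebc Nbc] := component_inner_nbr hrho halt hstart c_vs c_inner.
have b_vs : inl b \in vs := component_closed hrho c_vs Ebc.
have Mbc : M b == Some (c, i).
  by move: Ebc Nbc; rewrite edge_in_symdiff /= in_Medges => /addbP <- /negPn.
by apply/set0Pn; exists b; rewrite !inE Mbc switchedE b_vs andbT.
Qed.

Lemma path_end_ck : path_end v0 p (inr ck).
Proof. by rewrite /path_end !(eq_sym (inr ck)). Qed.

Lemma card_switched_le c : c != ck -> (#|switched_set c| <= #|day_set c|)%N.
Proof.
move=> ne_cck; rewrite -(cardsID (day_set c) (switched_set c)).
rewrite -[X in (_ <= X)%N](cardsID (switched_set c) (day_set c)) setIC leq_add2l.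
have [->|gain] := eqVneq (switched_set c :\: day_set c) set0; first by rewrite cards0.
by apply: leq_trans (card_switched_gain c) _; rewrite card_gt0 switched_loss.
Qed.

Lemma card_switched_ck : (#|switched_set ck| <= #|day_set ck| + 1)%N.
Proof.
rewrite -(cardsID (day_set ck) (switched_set ck)) leq_add ?card_switched_gain //.
by rewrite subset_leq_card ?subsetIr.
Qed.

Lemma switched_ck_Nedges a : switched a == Some ck -> (a, ck) \in Ni.
Proof.
rewrite switchedE; case: ifP => // _ Mack; apply/idPn => Nack.
have Eack : edge_in E (inr ck) (inl a).
  by rewrite edge_in_symdiff /= in_Medges Mack (negbTE Nack).
by case/negP: Nack; exact: (component_end_nbr hrho halt hstart hend path_end_ck Eack).
Qed.

Lemma card_switched_ck_le_qd : (#|switched_set ck| <= qd i ck)%N.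
Proof.
have [_ N_qd _ _] := hN; apply: leq_trans (N_qd i ck).
apply/subset_leq_card/subsetP => a; rewrite !inE => /switched_ck_Nedges.
by rewrite in_Nedges => /andP [].
Qed.

Section AgentEnd.
Variable a' : A.
Hypothesis a'_end : path_end v0 p (inl a').

Lemma path_end_agent a : path_end v0 p (inl a) -> a = a'.
Proof.
move: a'_end path_end_ck; rewrite /path_end; move: (last v0 p) => l.
by case/orP=> /eqP a'_at /orP [] /eqP ck_at /orP [] /eqP a_at; congruence.
Qed.

Lemma end_agent_unmatched c : M a' != Some (c, i).
Proof.
have [[//|c0] E0 N0] := component_S_nbr hrho halt hstart hend (mem_path_end a'_end).
apply/negP => /eqP Ma'.
have Na'c : (a', c) \in Ni.
  apply/idPn => Na'c; case/negP: (Na'c).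
  apply: (component_end_nbr hrho halt hstart hend a'_end (w := inr c)).
  by rewrite edge_in_symdiff /= in_Medges Ma' eqxx (negbTE Na'c).
have /andP [_ /eqP Na'] : (a' \in Xset M N i) && (N a' == Some (c, i)).
  by rewrite -in_Nedges.
have c0E : c0 = c by move: N0; rewrite /= in_Nedges Na' => /andP [_ /eqP [->]].
by move: E0 N0; rewrite c0E edge_in_symdiff /= in_Medges Ma' eqxx => /addbP <-.
Qed.

Lemma path_agent_matched a : inl a \in vs -> a != a' -> exists c, M a == Some (c, i).
Proof.
move=> a_vs ne_aa'.
have a_inner : ~~ path_end v0 p (inl a) by apply: contra ne_aa' => /path_end_agent ->.
have [[//|c] Eac Nac] := component_inner_nbr hrho halt hstart a_vs a_inner.
by exists c; move: Eac Nac; rewrite edge_in_symdiff /= in_Medges => /addbP <- /negPn.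
Qed.

Lemma card_switched_support : (#|[set a | switched a != None]| <= s i)%N.
Proof.
have [_ _ N_s _] := hN.
have sub_support : [set a | switched a != None] \subset a' |: Yset M i.
  apply/subsetP => a; rewrite -day_matching_support !inE.
  case: (eqVneq a a') => //= ne_aa'; rewrite /switched; case: ifP => // a_vs _.
  have [c Mac] := path_agent_matched a_vs ne_aa'.
  by rewrite /day_matching (eqP Mac) eqxx.
have le_YX : (#|Yset M i|.+1 <= #|Xset M N i|)%N by rewrite hXY -addn1 leq_add2l.
have le_XN : (#|Xset M N i| <= #|[set a | [exists c, N a == Some (c, i)]]|)%N.
  by apply/subset_leq_card/subsetP => a; rewrite !inE => /andP [].
apply: leq_trans (subset_leq_card sub_support) _; rewrite cardsU1.
apply: leq_trans (N_s i); apply: leq_trans le_XN; apply: leq_trans le_YX.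
by rewrite -add1n leq_add2r leq_b1.
Qed.

Lemma switched_feasible : (#|day_set ck| < remaining q M i ck)%N ->
  feasible_bmatching elig avail s qd q M i switched.
Proof.
move=> lt_ck; have [M_feas _] := hM i; have [M_elig _ _] := M_feas.
split=> [a c /eqP|c|]; last exact: card_switched_support.
  rewrite switchedE; case: ifP => _.
    by rewrite in_Nedges => /andP [Xa /eqP Nac]; exact: Xset_avail_agents hN Xa Nac.
  by move=> Mac; apply: M_elig; apply/eqP; rewrite day_matchingE.
have [->|ne_cck] := eqVneq c ck.
  by rewrite leq_min card_switched_ck_le_qd (leq_trans card_switched_ck) ?addn1.
exact: leq_trans (card_switched_le ne_cck) (card_day_le_cap c M_feas).
Qed.

Lemma switched_weight_gt :
  bm_weight alpha delta i (day_matching M i) < bm_weight alpha delta i switched.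
Proof.
apply: (bm_weight_lt (a0 := a') i alpha_gt0 delta_gt0).
- move=> a; case a_vs: (inl a \in vs); first by rewrite switched_path_agent.
  by rewrite /switched a_vs.
- case Ma': (day_matching M i a') => [c|] //.
  by move: (end_agent_unmatched c); rewrite -day_matchingE Ma' eqxx.
- exact/switched_path_agent/mem_path_end.
Qed.

End AgentEnd.

Lemma exists_agent_end : exists a', path_end v0 p (inl a').
Proof.
have := path_end_is_inl hrho halt hstart hend; rewrite /path_end.
case/orP: hck => /eqP ck_end.
  by rewrite {1}ck_end; case: (last v0 p) => // a' _; exists a'; rewrite eqxx orbT.
by rewrite ck_end; case: (v0) => // a' _; exists a'; rewrite eqxx.
Qed.

Lemma remaining_le_day_count : (remaining q M i ck <= #|day_set ck|)%N.
Proof.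
have [a' a'_end] := exists_agent_end; rewrite leqNgt; apply/negP => lt_ck.
have := (hM i).2 _ (switched_feasible a'_end lt_ck).
by rewrite leNgt (switched_weight_gt a'_end).
Qed.

End SwitchAlongComponent.

Theorem lemma4 (A C : finType) (T : nat)
  (elig : A -> C -> bool) (avail : A -> 'I_T -> bool)
  (s : 'I_T -> nat) (qd : 'I_T -> C -> nat) (q : C -> nat)
  (R : realFieldType) (alpha : A -> R) (delta : R)
  (halpha : forall a, 0 < alpha a) (hdelta : 0 < delta < 1)
  (M N : allocation A C T)
  (hM : greedy_output elig avail s qd q alpha delta M)
  (hN : optimal_alloc elig avail s qd q alpha delta N)
  (i : 'I_T) (z : nat) (hz : (0 < z)%N)
  (hXY : #|Xset M N i| = (#|Yset M i| + z)%N)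
  (v0 : A + C) (p : seq (A + C))
  (hrho : path_component (symdiff (Medges M i) (Nedges M N i)) v0 p)
  (halt : alternating (Nedges M N i) v0 p)
  (hstart : edge_in (Nedges M N i) v0 (head v0 p))
  (hend : edge_in (Nedges M N i) (last v0 (belast v0 p)) (last v0 p))
  (ck : C) (hck : (v0 == inr ck) || (last v0 p == inr ck)) :
  #|[set a | [exists d : 'I_T, (d <= i)%N && (M a == Some (ck, d))]]| = q ck.
Proof.
have delta_gt0 : 0 < delta by case/andP: hdelta.
have M_feas j := (hM j).1.
have day_ge := remaining_le_day_count halpha delta_gt0 hM hN.1 hz hXY hrho halt hstart hend hck.
have day_le := card_day_le_remaining ck (M_feas i).
have le_quota := allocated_before_le_quota ck M_feas (ltnW (ltn_ord i)).
rewrite -[LHS]/(allocated_before M i.+1 ck) allocated_before_succ.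
suff -> : #|[set a | M a == Some (ck, i)]| = (q ck - allocated_before M i ck)%N.
  exact: subnKC.
by apply/eqP; rewrite eqn_leq day_le day_ge.
Qed.
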